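(* For every $x\in P$ (the poset defined below) there is a sequence $(x_i)_{i<\omega}$ in $P$ such that either $x_i<x_j$ for all $j<i<\omega$ and $x$ is the greatest lower bound of $\{x_i: i<\omega\}$ in $P$, or $x_i<x_j$ for all $i<j<\omega$ and $x$ is the least upper bound of $\{x_i:i<\omega\}$ in $P$.
   Context: Let $P=\{p\}\cup\{p_{i_0,\ldots,i_n}: 0\le n<\omega,\ i_0,\ldots,i_n\in\omega\}$ (all these symbols distinct). Let $\le$ be the reflexive–transitive closure of the following strict relations: (0) for all $0\le j<i<\omega$: $p<p_i<p_j$; (E) for all $r\ge 0$, all $i_0,\ldots,i_{2r}\in\omega$, all $k\le i_{2r}$ and all $i<j<\omega$: $p_{i_0,\ldots,i_{2r},i}<p_{i_0,\ldots,i_{2r},j}<p_{i_0,\ldots,i_{2r-1},k}$ (for $r=0$ the last element is $p_k$); (O) for all $r\ge0$, all $i_0,\ldots,i_{2r+1}\in\omega$, all $k\le i_{2r+1}$ and all $j<i<\omega$: $p_{i_0,\ldots,i_{2r},k}<p_{i_0,\ldots,i_{2r+1},i}<p_{i_0,\ldots,i_{2r+1},j}$. This $\le$ is a partial order. *)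

From Stdlib Require Import List Arith Relations.
Import ListNotations.

(* The poset P: the element p is represented by the empty list [],
   and p_{i_0,...,i_n} (n >= 0) by the nonempty list [i_0; ...; i_n]. *)
Definition P := list nat.

(* The generating strict relations (0), (E), (O). [gen x y] means x < y.
   In (E): s = i_0..i_{2r} = t ++ [m] with |t| = 2r, m = i_{2r};
   the element p_{i_0..i_{2r-1},k} is t ++ [k] (for r = 0, t = [] and it is p_k).
   In (O): s = i_0..i_{2r+1} = t ++ [m] with |t| = 2r+1, m = i_{2r+1};
   p_{i_0..i_{2r},k} is t ++ [k]. *)
Inductive gen : P -> P -> Prop :=
| gen0_bot (i : nat) : gen [] [i]
| gen0_chain (i j : nat) : j < i -> gen [i] [j]
| genE1 (r : nat) (t : list nat) (m i j : nat) :
    length t = 2 * r -> i < j -> gen (t ++ [m; i]) (t ++ [m; j])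
| genE2 (r : nat) (t : list nat) (m k j : nat) :
    length t = 2 * r -> k <= m -> gen (t ++ [m; j]) (t ++ [k])
| genO1 (r : nat) (t : list nat) (m k i : nat) :
    length t = 2 * r + 1 -> k <= m -> gen (t ++ [k]) (t ++ [m; i])
| genO2 (r : nat) (t : list nat) (m i j : nat) :
    length t = 2 * r + 1 -> j < i -> gen (t ++ [m; i]) (t ++ [m; j]).

Definition Ple : P -> P -> Prop := clos_refl_trans P gen.
Definition Plt (x y : P) : Prop := Ple x y /\ x <> y.

Definition is_glb (x : P) (f : nat -> P) : Prop :=
  (forall i, Ple x (f i)) /\
  (forall y, (forall i, Ple y (f i)) -> Ple y x).

Definition is_lub (x : P) (f : nat -> P) : Prop :=
  (forall i, Ple (f i) x) /\
  (forall y, (forall i, Ple (f i) y) -> Ple x y).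

From Stdlib Require Import List Arith Relations Lia.
Import ListNotations.

(* Every x : P is approximated by its children x ++ [i].
   If x has odd length the children form an increasing chain (rule (E))
   lying below x, and x is their least upper bound; if x has even length
   (this includes the root p = []) they form a decreasing chain (rules (0)
   and (O)) lying above x, and x is their greatest lower bound.

   The extremality is proved by an invariant of the generating relation.
   Call "z is in the i-th subtree of x" the statement z = x ++ M :: rest
   with M >= i.  For x of odd length, moving upwards along one generating
   step from a point of the i-th subtree either stays in that subtree or
   lands above x; hence any upper bound y of all children lies, for every i,
   above x or in the i-th subtree of x.  Since y cannot lie in every subtree
   (its coordinate after x is a fixed number), y lies above x.  The even
   case is the mirror image, moving downwards. *)

Lemma gen_children_odd (x : P) (i j : nat) :
  Nat.Odd (length x) -> i < j -> gen (x ++ [i]) (x ++ [j]).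
Proof.
  intros [r Hr] Hij. destruct (exists_last (l := x)) as [t [m ->]].
  { intros ->. simpl in Hr. lia. }
  rewrite length_app in Hr. simpl in Hr. rewrite <- !app_assoc.
  apply (genE1 r); [lia | exact Hij].
Qed.

Lemma gen_children_even (x : P) (i j : nat) :
  Nat.Even (length x) -> j < i -> gen (x ++ [i]) (x ++ [j]).
Proof.
  intros [r Hr] Hji. destruct x as [|a l]; [now constructor |].
  destruct (exists_last (l := a :: l)) as [t [m Ht]]; [discriminate |].
  rewrite Ht in *. rewrite length_app in Hr. simpl in Hr. rewrite <- !app_assoc.
  apply (genO2 (r - 1)); [lia | exact Hji].
Qed.

Lemma gen_child_below_odd (x : P) (i : nat) :
  Nat.Odd (length x) -> gen (x ++ [i]) x.
Proof.
  intros [r Hr]. destruct (exists_last (l := x)) as [t [m ->]].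
  { intros ->. simpl in Hr. lia. }
  rewrite length_app in Hr. simpl in Hr. rewrite <- app_assoc.
  apply (genE2 r); lia.
Qed.

Lemma gen_child_above_even (x : P) (i : nat) :
  Nat.Even (length x) -> gen x (x ++ [i]).
Proof.
  intros [r Hr]. destruct x as [|a l]; [constructor |].
  destruct (exists_last (l := a :: l)) as [t [m Ht]]; [discriminate |].
  rewrite Ht in *. rewrite length_app in Hr. simpl in Hr. rewrite <- app_assoc.
  apply (genO1 (r - 1)); lia.
Qed.

Lemma le_siblings_odd (x : P) (k m : nat) :
  Nat.Odd (length x) -> k <= m -> Ple (x ++ [k]) (x ++ [m]).
Proof.
  intros Hx Hkm. destruct (Nat.eq_dec k m) as [-> | Hne]; [apply rt_refl |].
  apply rt_step, gen_children_odd; [exact Hx | lia].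
Qed.

Lemma le_siblings_even (x : P) (k m : nat) :
  Nat.Even (length x) -> k <= m -> Ple (x ++ [m]) (x ++ [k]).
Proof.
  intros Hx Hkm. destruct (Nat.eq_dec k m) as [-> | Hne]; [apply rt_refl |].
  apply rt_step, gen_children_even; [exact Hx | lia].
Qed.

Definition in_subtree (x : P) (i : nat) (z : P) : Prop :=
  exists M rest, i <= M /\ z = x ++ M :: rest.

Lemma in_subtree_extend (x : P) (i M : nat) (r l : list nat) :
  i <= M -> in_subtree x i ((x ++ M :: r) ++ l).
Proof. intros HiM. exists M, (r ++ l). split; [exact HiM |]. now rewrite <- app_assoc. Qed.

Lemma not_in_all_subtrees (x y : P) (Q : Prop) :
  (forall i, Q \/ in_subtree x i y) -> Q.
Proof.
  intros H. destruct (H 0) as [q | [M [rest [_ Hy]]]]; [exact q |].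
  destruct (H (S M)) as [q | [M' [rest' [HM Hy']]]]; [exact q |].
  rewrite Hy in Hy'. apply app_inv_head in Hy'. injection Hy'. lia.
Qed.

Lemma split_last (x t : P) (k M : nat) (rest : list nat) :
  t ++ [k] = x ++ M :: rest ->
  (t = x /\ k = M) \/ (exists r, t = x ++ M :: r).
Proof.
  revert rest. induction rest as [| b r _] using rev_ind; intros H.
  - apply app_inj_tail in H as [-> ->]. now left.
  - rewrite app_comm_cons, app_assoc in H. apply app_inj_tail in H as [-> _].
    right. now exists r.
Qed.

Lemma split_last2 (x t : P) (m j M : nat) (rest : list nat) :
  t ++ [m; j] = x ++ M :: rest ->
  (t ++ [m] = x /\ j = M) \/ (t = x /\ m = M) \/ (exists r, t = x ++ M :: r).
Proof.
  intros H. replace (t ++ [m; j]) with ((t ++ [m]) ++ [j]) in H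
    by now rewrite <- app_assoc.
  destruct (split_last _ _ _ _ _ H) as [[Ht ->] | [r Hr]]; [now left |].
  right. apply split_last in Hr as [[-> ->] | [r' ->]]; [now left | right; now exists r'].
Qed.

Ltac length_contra H :=
  apply (f_equal (@length nat)) in H; simpl in H; rewrite ?length_app in H; simpl in H; lia.

(* The subtree is left only by the second clause of (E) from a child of x,
   which lands on a sibling of x of smaller index, hence above x; the
   remaining cases either stay inside or contradict the parity of x. *)
Lemma subtree_step_up (x y z : P) (i : nat) :
  Nat.Odd (length x) -> gen y z -> in_subtree x i y -> Ple x z \/ in_subtree x i z.
Proof.
  intros Hx G [M [rest [HiM Hy]]]. pose proof Hx as [q Hq].
  destruct G as [a | a b _ | r t m a b Ht Hab | r t m k j Ht Hkm
                | r t m k a Ht Hkm | r t m a b Ht Hba].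
  - length_contra Hy.
  - length_contra Hy.
  - right. apply split_last2 in Hy as [[Hx' ->] | [[-> ->] | [r' ->]]].
    + exists b, []. split; [lia |]. now rewrite <- Hx', <- app_assoc.
    + rewrite Ht in Hq. lia.
    + apply in_subtree_extend. exact HiM.
  - apply split_last2 in Hy as [[Hx' _] | [[-> ->] | [r' ->]]].
    + left. rewrite <- Hx'. apply le_siblings_even; [exists r; exact Ht | exact Hkm].
    + rewrite Ht in Hq. lia.
    + right. apply in_subtree_extend. exact HiM.
  - right. apply split_last in Hy as [[-> ->] | [r' ->]].
    + exists m, [a]. split; [lia | reflexivity].
    + apply in_subtree_extend. exact HiM.
  - apply split_last2 in Hy as [[Hx' _] | [[-> ->] | [r' ->]]].
    + rewrite <- Hx', length_app in Hq. simpl in Hq. lia.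
    + right. exists M, [b]. split; [exact HiM | reflexivity].
    + right. apply in_subtree_extend. exact HiM.
Qed.

(* The subtree is left only from a child of x, by rule (0) to the root
   x = p itself or by the first clause of (O) to a sibling of x of smaller
   index, hence below x. *)
Lemma subtree_step_down (x y z : P) (i : nat) :
  Nat.Even (length x) -> gen z y -> in_subtree x i y -> Ple z x \/ in_subtree x i z.
Proof.
  intros Hx G [M [rest [HiM Hy]]]. pose proof Hx as [q Hq].
  destruct G as [a | a b Hba | r t m a b Ht Hab | r t m k j Ht Hkm
                | r t m k a Ht Hkm | r t m a b Ht Hba].
  - destruct x; [left; apply rt_refl | length_contra Hy].
  - destruct x; simpl in Hy; [| length_contra Hy].
    injection Hy as -> <-. right. exists a, []. split; [lia | reflexivity].
  - apply split_last2 in Hy as [[Hx' _] | [[-> ->] | [r' ->]]].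
    + rewrite <- Hx', length_app in Hq. simpl in Hq. lia.
    + right. exists M, [a]. split; [exact HiM | reflexivity].
    + right. apply in_subtree_extend. exact HiM.
  - right. apply split_last in Hy as [[-> ->] | [r' ->]].
    + exists m, [j]. split; [lia | reflexivity].
    + apply in_subtree_extend. exact HiM.
  - apply split_last2 in Hy as [[Hx' _] | [[-> ->] | [r' ->]]].
    + left. rewrite <- Hx'. apply le_siblings_odd; [exists r; exact Ht | exact Hkm].
    + rewrite Ht in Hq. lia.
    + right. apply in_subtree_extend. exact HiM.
  - right. apply split_last2 in Hy as [[Hx' ->] | [[-> ->] | [r' ->]]].
    + exists a, []. split; [lia |]. now rewrite <- Hx', <- app_assoc.
    + rewrite Ht in Hq. lia.
    + apply in_subtree_extend. exact HiM.
Qed.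

Lemma invariant_along_closure (R : relation P) (B S : P -> Prop) :
  (forall y z, R y z -> B y -> B z) ->
  (forall y z, R y z -> S y -> B z \/ S z) ->
  forall y z, clos_refl_trans P R y z -> B y \/ S y -> B z \/ S z.
Proof.
  intros HB HS y z H. induction H as [y z G | y | y w z _ IH1 _ IH2]; auto.
  intros [Hy | Hy]; [left; exact (HB _ _ G Hy) | exact (HS _ _ G Hy)].
Qed.

Lemma Ple_transp (y z : P) : Ple z y -> clos_refl_trans P (transp P gen) y z.
Proof.
  intros H. induction H as [z y G | z | z w y _ IH1 _ IH2].
  - now apply rt_step.
  - apply rt_refl.
  - exact (rt_trans _ _ _ _ _ IH2 IH1).
Qed.

Lemma lub_children_odd (x : P) :
  Nat.Odd (length x) -> is_lub x (fun i => x ++ [i]).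
Proof.
  intros Hx. split; [intro i; apply rt_step, gen_child_below_odd, Hx |].
  intros y Hy. apply (not_in_all_subtrees x y). intros i.
  apply (invariant_along_closure gen (Ple x) (in_subtree x i)) with (x ++ [i]).
  - intros u v G Hu. exact (rt_trans _ _ _ _ _ Hu (rt_step _ _ _ _ G)).
  - intros u v G Hu. exact (subtree_step_up x u v i Hx G Hu).
  - apply Hy.
  - right. exists i, []. auto.
Qed.

Lemma glb_children_even (x : P) :
  Nat.Even (length x) -> is_glb x (fun i => x ++ [i]).
Proof.
  intros Hx. split; [intro i; apply rt_step, gen_child_above_even, Hx |].
  intros y Hy. apply (not_in_all_subtrees x y). intros i.
  apply (invariant_along_closure (transp P gen) (fun v => Ple v x) (in_subtree x i))
    with (x ++ [i]).
  - intros u v G Hu. exact (rt_trans _ gen _ _ _ (rt_step _ gen _ _ G) Hu).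
  - intros u v G Hu. exact (subtree_step_down x u v i Hx G Hu).
  - apply Ple_transp, Hy.
  - right. exists i, []. auto.
Qed.

Lemma children_distinct (x : P) (i j : nat) : i <> j -> x ++ [i] <> x ++ [j].
Proof. intros Hij H. apply app_inv_head in H. injection H. exact Hij. Qed.

Theorem mainTheorem7 :
  forall x : P, exists f : nat -> P,
    ((forall i j : nat, j < i -> Plt (f i) (f j)) /\ is_glb x f) \/
    ((forall i j : nat, i < j -> Plt (f i) (f j)) /\ is_lub x f).
Proof.
  intros x. exists (fun i => x ++ [i]).
  destruct (Nat.Even_or_Odd (length x)) as [Hx | Hx].
  - left. split; [| exact (glb_children_even x Hx)].
    intros i j Hji. split.
    + apply rt_step, gen_children_even; assumption.
    + apply children_distinct. lia.
  - right. split; [| exact (lub_children_odd x Hx)].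
    intros i j Hij. split.
    + apply rt_step, gen_children_odd; assumption.
    + apply children_distinct. lia.
Qed.
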